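(* Let $f:\mathcal C_n\to\mathbb R$, let $\xi$ be a product probability measure on $\mathcal C_n$, and let $Y\sim\xi$. Then $$\mathbb E|f(Y)-f(\mathbb EY)|\le\sqrt n\,\mathrm{Lip}(f),$$ where $f(\mathbb EY)$ uses the harmonic extension of $f$ to $[-1,1]^n$.
   Context: Notation. $\mathcal C_n=\{-1,1\}^n$. Definitions. $\partial_if(y)=\tfrac12\big(f(y^{i\to1})-f(y^{i\to-1})\big)$, where $y^{i\to\pm1}$ is $y$ with its $i$-th coordinate set to $\pm1$, and $\mathrm{Lip}(f)=\max_{i,y}|\partial_if(y)|$. The harmonic extension of $f$ to $[-1,1]^n$ is its unique multilinear polynomial $\sum_S\hat f(S)\prod_{i\in S}x_i$. *)

From HB Require Import structures.
From mathcomp Require Import all_boot all_order all_algebra.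
Set Implicit Arguments. Unset Strict Implicit. Unset Printing Implicit Defensive.
Import Order.TTheory GRing.Theory Num.Theory.
Local Open Scope ring_scope.

(* A point y of C_n = {-1,1}^n is encoded as a boolean vector;
   its i-th coordinate is +1 if y i = true and -1 otherwise. *)
Definition cube (n : nat) := {ffun 'I_n -> bool}.

Definition coord {R : numDomainType} {n : nat} (y : cube n) (i : 'I_n) : R :=
  if y i then 1 else -1.

Definition setc {n : nat} (y : cube n) (i : 'I_n) (b : bool) : cube n :=
  [ffun j => if j == i then b else y j].

Definition dpart {R : numFieldType} {n : nat} (f : cube n -> R) (i : 'I_n) (y : cube n) : R :=
  (f (setc y i true) - f (setc y i false)) / 2%:R.

Definition Lip {R : realFieldType} {n : nat} (f : cube n -> R) : R :=
  \big[Num.max/0]_(i : 'I_n) \big[Num.max/0]_(y : cube n) `|dpart f i y|.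

Definition fourier {R : numFieldType} {n : nat} (f : cube n -> R) (S : {set 'I_n}) : R :=
  (2%:R ^+ n)^-1 * \sum_(y : cube n) f y * \prod_(i in S) coord y i.

Definition harm {R : numFieldType} {n : nat} (f : cube n -> R) (x : 'I_n -> R) : R :=
  \sum_(S : {set 'I_n}) fourier f S * \prod_(i in S) x i.

Definition prodmeas {R : numDomainType} {n : nat} (p : 'I_n -> R) (y : cube n) : R :=
  \prod_(i : 'I_n) (if y i then p i else 1 - p i).

Definition expect {R : numDomainType} {n : nat} (p : 'I_n -> R) (g : cube n -> R) : R :=
  \sum_(y : cube n) prodmeas p y * g y.

Definition meanY {R : numDomainType} {n : nat} (p : 'I_n -> R) : 'I_n -> R :=
  fun i => expect p (fun y => coord y i).

From Pilot Require Import Defs.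
From HB Require Import structures.
From mathcomp Require Import all_boot all_order all_algebra.
From mathcomp Require Import ring lra.
Set Implicit Arguments. Unset Strict Implicit. Unset Printing Implicit Defensive.
Import Order.TTheory GRing.Theory Num.Theory.
Local Open Scope ring_scope.

(* Since the harmonic extension is multilinear and the coordinates of Y are
   independent, f(E Y) = E f(Y); so the left-hand side is the mean absolute
   deviation of f(Y), which is at most its standard deviation.  The variance
   is bounded by n Lip(f)^2 by induction on n: conditioning on the first
   coordinate, Var f = a Var f_1 + (1 - a) Var f_0 + a (1 - a) (E f_1 - E f_0)^2,
   and the last term is at most Lip(f)^2 because |f_1 - f_0| <= 2 Lip(f). *)

Definition cube_cons n (b : bool) (y : cube n) : cube n.+1 :=
  [ffun i => if unlift ord0 i is Some j then y j else b].

Definition cube_behead n (y : cube n.+1) : cube n := [ffun j => y (lift ord0 j)].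

Lemma cube_cons0 n b (y : cube n) : cube_cons b y ord0 = b.
Proof. by rewrite ffunE unlift_none. Qed.

Lemma cube_consS n b (y : cube n) j : cube_cons b y (lift ord0 j) = y j.
Proof. by rewrite ffunE liftK. Qed.

Lemma cube_beheadK n (y : cube n.+1) : cube_cons (y ord0) (cube_behead y) = y.
Proof. by apply/ffunP => i; rewrite ffunE; case: unliftP => [j ->|->] //; rewrite ffunE. Qed.

Lemma sum_cube_cons (V : nmodType) n (F : cube n.+1 -> V) :
  \sum_(y : cube n.+1) F y = \sum_(b : bool) \sum_(y : cube n) F (cube_cons b y).
Proof.
rewrite pair_big /= (reindex (fun z : bool * cube n => cube_cons z.1 z.2)) //=.
exists (fun y : cube n.+1 => (y ord0, cube_behead y)) => [[b y] _ | y _] /=;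
  last exact: cube_beheadK.
by rewrite cube_cons0; congr pair; apply/ffunP => j; rewrite ffunE cube_consS.
Qed.

Lemma setc_cons0 n b c (y : cube n) : setc (cube_cons b y) ord0 c = cube_cons c y.
Proof.
apply/ffunP => i; rewrite !ffunE; case: unliftP => [j ->|->]; last by rewrite eqxx.
by rewrite eq_sym (negbTE (neq_lift _ _)).
Qed.

Lemma setc_consS n b c (y : cube n) j :
  setc (cube_cons b y) (lift ord0 j) c = cube_cons b (setc y j c).
Proof.
apply/ffunP => i; rewrite !ffunE; case: unliftP => [k ->|->].
  by rewrite (inj_eq lift_inj) ffunE.
by rewrite (negbTE (neq_lift _ _)).
Qed.

Lemma sum_cube_prod (R : comNzRingType) n (g : 'I_n -> bool -> R) :
  \sum_(y : cube n) \prod_i g i (y i) = \prod_i (g i true + g i false).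
Proof. by rewrite -bigA_distr_bigA; apply: eq_bigr => i _; rewrite big_bool. Qed.

Lemma sum_subset_prod (R : comNzRingType) n (a : 'I_n -> R) :
  \sum_(S : {set 'I_n}) \prod_(i in S) a i = \prod_i (1 + a i).
Proof.
transitivity (\sum_(y : cube n) \prod_i (if y i then a i else 1)); last first.
  rewrite (sum_cube_prod (fun i (b : bool) => if b then a i else 1)).
  by apply: eq_bigr => i _; rewrite addrC.
rewrite (reindex (fun y : cube n => [set i | y i])) /=.
  by apply: eq_bigr => y _; rewrite big_mkcond; apply: eq_bigr => i _; rewrite inE.
exists (fun S : {set 'I_n} => [ffun i => i \in S]) => [y _ | S _].
  by apply/ffunP => i; rewrite ffunE inE.
by apply/setP => i; rewrite inE ffunE.
Qed.

Section Expectation.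

Variables (R : numDomainType) (n : nat) (p : 'I_n -> R).

Lemma sum_prodmeas : \sum_y prodmeas p y = 1.
Proof.
rewrite (sum_cube_prod (fun i (b : bool) => if b then p i else 1 - p i)).
by apply: big1 => i _; rewrite addrC subrK.
Qed.

Lemma eq_expect (g h : cube n -> R) : g =1 h -> expect p g = expect p h.
Proof. by move=> gh; apply: eq_bigr => y _; rewrite gh. Qed.

Lemma expect_cst c : expect p (fun=> c) = c.
Proof. by rewrite /expect -big_distrl /= sum_prodmeas mul1r. Qed.

Lemma expectD g h : expect p (fun y => g y + h y) = expect p g + expect p h.
Proof. by rewrite /expect -big_split; apply: eq_bigr => y _; rewrite mulrDr. Qed.

Lemma expectZ c g : expect p (fun y => c * g y) = c * expect p g.
Proof. by rewrite /expect big_distrr; apply: eq_bigr => y _ /=; rewrite mulrCA. Qed.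

Lemma expectB g h : expect p (fun y => g y - h y) = expect p g - expect p h.
Proof.
rewrite -mulN1r -expectZ -expectD.
by apply: eq_expect => y; rewrite mulN1r.
Qed.

Hypothesis p01 : forall i, 0 <= p i <= 1.

Lemma prodmeas_ge0 y : 0 <= prodmeas p y.
Proof. by apply: prodr_ge0 => i _; have /andP[] := p01 i; case: (y i); rewrite ?subr_ge0. Qed.

Lemma ler_expect g h : (forall y, g y <= h y) -> expect p g <= expect p h.
Proof. by move=> gh; apply: ler_sum => y _; rewrite ler_wpM2l ?prodmeas_ge0. Qed.

Lemma expect_ge0 g : (forall y, 0 <= g y) -> 0 <= expect p g.
Proof. by move=> g0; rewrite -(expect_cst 0) ler_expect. Qed.

Lemma ler_norm_expect g : `|expect p g| <= expect p (fun y => `|g y|).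
Proof.
apply: le_trans (ler_norm_sum _ _ _) _; apply: ler_sum => y _.
by rewrite normrM ger0_norm ?prodmeas_ge0.
Qed.

End Expectation.

Definition variance {R : numDomainType} {n : nat} (p : 'I_n -> R) (g : cube n -> R) : R :=
  expect p (fun y => g y ^+ 2) - expect p g ^+ 2.

Lemma expect_sqr_dev (R : numDomainType) n (p : 'I_n -> R) g c :
  expect p (fun y => (g y - c) ^+ 2) = variance p g + (expect p g - c) ^+ 2.
Proof.
rewrite (@eq_expect _ _ _ _ (fun y => g y ^+ 2 - (2%:R * c * g y - c ^+ 2))); last first.
  by move=> y; ring.
by rewrite !expectB expectZ expect_cst /variance; ring.
Qed.

Lemma variance_ge0 (R : realDomainType) n (p : 'I_n -> R)
    (p01 : forall i, 0 <= p i <= 1) g :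
  0 <= variance p g.
Proof.
have := expect_ge0 p01 (fun y => sqr_ge0 (g y - expect p g)).
by rewrite expect_sqr_dev subrr expr0n addr0.
Qed.

Lemma expect_norm_sqr_le (R : realDomainType) n (p : 'I_n -> R)
    (p01 : forall i, 0 <= p i <= 1) g :
  expect p (fun y => `|g y|) ^+ 2 <= expect p (fun y => g y ^+ 2).
Proof.
rewrite -subr_ge0 -(eq_expect _ (fun y => real_normK (num_real (g y)))).
exact: variance_ge0.
Qed.

Lemma dpart_cons (R : numFieldType) n (g : cube n.+1 -> R) b j y :
  dpart (g \o cube_cons b) j y = dpart g (lift ord0 j) (cube_cons b y).
Proof. by rewrite /dpart /= !setc_consS. Qed.

Lemma dpart0_cons (R : numFieldType) n (g : cube n.+1 -> R) b y :
  g (cube_cons true y) - g (cube_cons false y) = 2%:R * dpart g ord0 (cube_cons b y).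
Proof. by rewrite /dpart !setc_cons0 mulrCA mulfV ?mulr1 ?pnatr_eq0. Qed.

Section ConditionFirst.

Variables (R : numFieldType) (n : nat) (p : 'I_n.+1 -> R).

Let a := p ord0.
Let q := fun j => p (lift ord0 j).

Lemma prodmeas_cons b y :
  prodmeas p (cube_cons b y) = (if b then a else 1 - a) * prodmeas q y.
Proof.
rewrite /prodmeas big_ord_recl cube_cons0; congr (_ * _).
by apply: eq_bigr => j _; rewrite cube_consS.
Qed.

Lemma expect_cons g :
  expect p g = a * expect q (g \o cube_cons true) + (1 - a) * expect q (g \o cube_cons false).
Proof.
rewrite /expect sum_cube_cons big_bool /= !big_distrr /=.
by congr (_ + _); apply: eq_bigr => y _; rewrite prodmeas_cons mulrA.
Qed.

Lemma variance_cons g :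
  variance p g = a * variance q (g \o cube_cons true)
                 + (1 - a) * variance q (g \o cube_cons false)
    + a * (1 - a) * (expect q (g \o cube_cons true) - expect q (g \o cube_cons false)) ^+ 2.
Proof. by rewrite /variance !expect_cons /=; ring. Qed.

End ConditionFirst.

Lemma bernoulli_spread_le (R : realFieldType) (a d L : R) :
  0 <= a <= 1 -> `|d| <= 2%:R * L -> a * (1 - a) * d ^+ 2 <= L ^+ 2.
Proof.
move=> /andP[a0 a1] /ler_normlP[dL1 dL2].
have quarter : 4%:R * (a * (1 - a)) <= 1 by have := sqr_ge0 (2%:R * a - 1); nra.
nra.
Qed.

Lemma variance_le_dpart (R : realFieldType) n (p : 'I_n -> R)
    (p01 : forall i, 0 <= p i <= 1) (f : cube n -> R) L :
  (forall i y, `|dpart f i y| <= L) -> variance p f <= n%:R * L ^+ 2.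
Proof.
elim: n p p01 f => [|n IH] p p01 f fL.
  have cst y : f y = f [ffun => false] by congr f; apply/ffunP => -[].
  rewrite /variance (eq_expect _ (fun y => congr1 (fun t : R => t ^+ 2) (cst y))).
  by rewrite (eq_expect _ cst) !expect_cst subrr mul0r.
set q := fun j => p (lift ord0 j).
have q01 j : 0 <= q j <= 1 by exact: p01.
have fbL b j y : `|dpart (f \o cube_cons b) j y| <= L by rewrite dpart_cons.
have spread : `|expect q (f \o cube_cons true) - expect q (f \o cube_cons false)| <= 2%:R * L.
  rewrite -expectB -(expect_cst q (2%:R * L)).
  apply: le_trans (ler_norm_expect q01 _) (ler_expect q01 _) => y /=.
  by rewrite (dpart0_cons f true) normrM ger0_norm ?ler_wpM2l.
have cross := bernoulli_spread_le (p01 ord0) spread.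
have /andP[a0 a1] := p01 ord0.
have a1' : 0 <= 1 - p ord0 by rewrite subr_ge0.
have V1 := ler_wpM2l a0 (IH q q01 _ (fbL true)).
have V0 := ler_wpM2l a1' (IH q q01 _ (fbL false)).
rewrite variance_cons -/q -natr1; lra.
Qed.

Lemma harmE (R : numFieldType) n (f : cube n -> R) (x : 'I_n -> R) :
  harm f x = \sum_y f y * \prod_i ((1 + Defs.coord y i * x i) / 2%:R).
Proof.
rewrite /harm /fourier.
under eq_bigr do rewrite -mulrA big_distrl /= big_distrr /=.
rewrite exchange_big /=; apply: eq_bigr => y _.
transitivity ((2%:R ^+ n)^-1 * f y *
              \sum_(S : {set 'I_n}) \prod_(i in S) (Defs.coord y i * x i)).
  by rewrite big_distrr /=; apply: eq_bigr => S _; rewrite big_split /=; ring.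
rewrite sum_subset_prod -mulrA mulrCA big_split /= prodr_const card_ord exprVn.
by rewrite [_ ^-1 * _]mulrC.
Qed.

Lemma meanYE (R : numDomainType) n (p : 'I_n -> R) i : meanY p i = 2%:R * p i - 1.
Proof.
pose g j (b : bool) : R :=
  (if b then p j else 1 - p j) * (if j == i then (if b then 1 else -1) else 1).
transitivity (\sum_(y : cube n) \prod_j g j (y j)).
  apply: eq_bigr => y _; rewrite big_split /=; congr (_ * _).
  by rewrite -big_mkcond big_pred1_eq.
rewrite sum_cube_prod (bigD1 i) //= big1 ?mulr1 /g ?eqxx; first by ring.
by move=> j /negbTE ->; rewrite !mulr1 addrC subrK.
Qed.

Lemma harm_meanY (R : numFieldType) n (p : 'I_n -> R) (f : cube n -> R) :
  harm f (meanY p) = expect p f.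
Proof.
rewrite harmE /expect; apply: eq_bigr => y _; rewrite mulrC; congr (_ * _).
by apply: eq_bigr => i _; rewrite meanYE /Defs.coord; case: (y i); field.
Qed.

Lemma Lip_ge0 (R : realFieldType) n (f : cube n -> R) : 0 <= Lip f.
Proof. exact: bigmax_ge_id. Qed.

Lemma dpart_le_Lip (R : realFieldType) n (f : cube n -> R) i y : `|dpart f i y| <= Lip f.
Proof.
apply: le_trans (le_bigmax _ _ i).
exact: (le_bigmax _ (fun y => `|dpart f i y|) y).
Qed.

Theorem mainTheorem13 (R : rcfType) (n : nat) (p : 'I_n -> R)
  (hp : forall i, 0 <= p i <= 1) (f : cube n -> R) :
  expect p (fun y => `|f y - harm f (meanY p)|) <= Num.sqrt (n%:R) * Lip f.
Proof.
rewrite harm_meanY; set e := expect p _.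
have e0 : 0 <= e by apply: expect_ge0 => y.
have e2 : e ^+ 2 <= n%:R * Lip f ^+ 2.
  apply: le_trans (expect_norm_sqr_le hp _) _.
  rewrite expect_sqr_dev subrr expr0n addr0.
  exact: variance_le_dpart hp f _ (dpart_le_Lip f).
rewrite -(ger0_norm e0) -sqrtr_sqr -(ger0_norm (Lip_ge0 f)) -sqrtr_sqr -sqrtrM ?ler0n //.
by rewrite ler_sqrt // mulr_ge0 ?ler0n ?sqr_ge0.
Qed.
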